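(* Let $(H_X,H_Z)$ be a CSS code with CSS logical basis $(L_X,L_Z)$ such that every vector in $\mathrm{rs}(H_X)+\mathrm{rs}(L_X)$ and every vector in $\mathrm{rs}(H_Z)+\mathrm{rs}(L_Z)$ has even Hamming weight. Let $\mathcal L\subseteq[k]\setminus\{1\}$ and $u=\sum_{j\in\mathcal L}(L_X)_j$, where $(L_X)_j$ is row $j$. Then for every $z\in(L_Z)_1+\mathrm{rs}(H_Z)$: (i) for every $x\in u+\mathrm{rs}(H_X)$, the Pauli operator $(x|z)$ (representing $\overline Z_1\overline X_{\mathcal L}$) has even weight $|x\vee z|$; (ii) for every $x\in (L_X)_1+u+\mathrm{rs}(H_X)$, the Pauli operator $(x|z)$ (representing $\overline Y_1\overline X_{\mathcal L}$ up to phase) has odd weight $|x\vee z|$.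
   Context: Conventions: arithmetic over $\mathbb F_2$, row vectors, $\mathrm{rs}$ = row space, $\ker M=\{v:Mv^T=0\}$. A CSS code is given by $H_X,H_Z$ with $H_XH_Z^T=0$, $k=n-\operatorname{rank}H_X-\operatorname{rank}H_Z$; a CSS logical basis is $L_X,L_Z\in\mathbb F_2^{k\times n}$ with rows of $L_X$ in $\ker H_Z$, rows of $L_Z$ in $\ker H_X$, $L_XL_Z^T=I_k$. A pair $(x|z)\in\mathbb F_2^{2n}$ represents the Pauli operator $\prod_iX_i^{x_i}Z_i^{z_i}$ up to phase; its weight is $|x\vee z|=\#\{i:x_i=1\text{ or }z_i=1\}$. *)

From mathcomp Require Import all_boot all_algebra.
Set Implicit Arguments. Unset Strict Implicit. Unset Printing Implicit Defensive.
Import GRing.Theory.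
Local Open Scope ring_scope.

Definition hwt (n : nat) (v : 'rV['F_2]_n) : nat := #|[set i : 'I_n | v 0 i != 0]|.

Definition pauli_wt (n : nat) (x z : 'rV['F_2]_n) : nat :=
  #|[set i : 'I_n | (x 0 i != 0) || (z 0 i != 0)]|.

From mathcomp Require Import all_boot all_algebra.
Set Implicit Arguments. Unset Strict Implicit. Unset Printing Implicit Defensive.
Import GRing.Theory.
Local Open Scope ring_scope.

(* Over F_2 one has |x v z| = |x| + |z| + x.z (mod 2), and x, z lie in the
   even-weight spaces rs(H_X) + rs(L_X) and rs(H_Z) + rs(L_Z), so the parity
   of |x v z| is the inner product x.z.  Since rs(H_X) is orthogonal to the
   coset (L_Z)_1 + rs(H_Z) and (L_X)_j.z = [j = 1], x.z only depends on the
   logical part of x, and it counts whether X_1 occurs in it. *)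

Lemma F2_eq01 (a : 'F_2) : a = 0 \/ a = 1.
Proof.
case: a => [[|[|m]]] lt_m2; first by left; apply: val_inj.
  by right; apply: val_inj.
by move: lt_m2; rewrite pdiv_id.
Qed.

Lemma natrF2_odd (m : nat) : (m%:R : 'F_2) = (odd m)%:R.
Proof.
rewrite -{1}(odd_double_half m) natrD -muln2 natrM.
by rewrite (@pchar_Fp_0 2) // mulr0 addr0.
Qed.

Lemma odd_natrF2 (m : nat) : odd m = ((m%:R : 'F_2) != 0).
Proof. by rewrite natrF2_odd; case: (odd m); rewrite ?eqxx ?oner_eq0. Qed.

Lemma natrF2_neq0 (a : 'F_2) : ((a != 0)%:R : 'F_2) = a.
Proof. by case: (F2_eq01 a) => ->; rewrite ?eqxx ?oner_eq0. Qed.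

Lemma natrF2_orb (a b : 'F_2) :
  (((a != 0) || (b != 0))%:R : 'F_2) = a + b + a * b.
Proof.
have one_add1 : (1 + 1 : 'F_2) = 0 by rewrite -(@pchar_Fp_0 2).
by case: (F2_eq01 a) => ->; case: (F2_eq01 b) => ->;
  rewrite ?eqxx ?oner_eq0 /= ?mul0r ?mulr0 ?mul1r ?addr0 ?one_add1 ?add0r.
Qed.

Lemma natr_hwt n (v : 'rV['F_2]_n) : ((hwt v)%:R : 'F_2) = \sum_i v 0 i.
Proof.
rewrite /hwt -sum1_card big_mkcond /= natr_sum; apply: eq_bigr => i _.
by rewrite inE -{2}(natrF2_neq0 (v 0 i)); case: (v 0 i != 0).
Qed.

Lemma natr_pauli_wt n (x z : 'rV['F_2]_n) :
  ((pauli_wt x z)%:R : 'F_2) = \sum_i x 0 i + \sum_i z 0 i + (x *m z^T) 0 0.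
Proof.
rewrite /pauli_wt -sum1_card big_mkcond /= natr_sum mxE -!big_split /=.
apply: eq_bigr => i _; rewrite inE !mxE -natrF2_orb.
by case: (_ || _).
Qed.

Lemma odd_pauli_wt_even n (x z : 'rV['F_2]_n) :
  ~~ odd (hwt x) -> ~~ odd (hwt z) -> odd (pauli_wt x z) = ((x *m z^T) 0 0 != 0).
Proof.
move=> even_x even_z.
have natr_even m : ~~ odd m -> (m%:R : 'F_2) = 0.
  by move=> /negbTE even_m; rewrite natrF2_odd even_m.
by rewrite odd_natrF2 natr_pauli_wt -!natr_hwt !natr_even ?add0r.
Qed.

Lemma mul_tr_eq0C (R : comNzRingType) m1 m2 n (A : 'M[R]_(m1, n)) (B : 'M[R]_(m2, n)) :
  A *m B^T = 0 -> B *m A^T = 0.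
Proof. by move=> AB0; rewrite -[LHS]trmxK trmx_mul trmxK AB0 trmx0. Qed.

Section Cosets.

Variables (F : fieldType) (m1 m2 n : nat).
Implicit Types (x a : 'rV[F]_n).

Lemma coset_sub_col_mx (A : 'M[F]_(m1, n)) (B : 'M[F]_(m2, n)) x a :
  (x - a <= A)%MS -> (a <= B)%MS -> (x <= col_mx A B)%MS.
Proof. by move=> xa_A a_B; rewrite -addsmxE -(subrK a x) addmx_sub_adds. Qed.

Lemma coset_mul_tr (H : 'M[F]_(m1, n)) (z : 'M[F]_(m2, n)) x a :
  (x - a <= H)%MS -> H *m z^T = 0 -> x *m z^T = a *m z^T.
Proof.
case/submxP=> D xaE Hz.
by rewrite -(subrK a x) mulmxDl xaE -mulmxA Hz mulmx0 add0r.
Qed.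

End Cosets.

Section CSSLogicalZ.

Variables (F : fieldType) (n mx mz k : nat).
Variables (HX : 'M[F]_(mx, n)) (HZ : 'M[F]_(mz, n)) (LX LZ : 'M[F]_(k, n)).
Hypothesis hcss : HX *m HZ^T = 0.
Hypothesis hLXker : LX *m HZ^T = 0.
Hypothesis hLZker : LZ *m HX^T = 0.
Hypothesis hdual : LX *m LZ^T = 1%:M.

Variables (i : 'I_k) (z : 'rV[F]_n).
Hypothesis z_coset : (z - row i LZ <= HZ)%MS.

Lemma stabX_mul_trZ : HX *m z^T = 0.
Proof.
apply: mul_tr_eq0C.
by rewrite (coset_mul_tr z_coset (mul_tr_eq0C hcss)) -row_mul hLZker row0.
Qed.

Lemma logicalX_mul_trZ (j : 'I_k) : (row j LX *m z^T) 0 0 = (j == i)%:R.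
Proof.
have ->: row j LX *m z^T = row j LX *m (row i LZ)^T.
  rewrite -[LHS]trmxK trmx_mul trmxK (coset_mul_tr z_coset) ?trmx_mul ?trmxK //.
  by rewrite mul_tr_eq0C // -row_mul hLXker row0.
by rewrite tr_row colE mulmxA -row_mul hdual row1 mul_delta_mx_cond mulmxnE mxE !eqxx.
Qed.

Lemma sum_logicalX_mul_trZ (S : {set 'I_k}) :
  ((\sum_(j in S) row j LX) *m z^T) 0 0 = (i \in S)%:R.
Proof.
rewrite mulmx_suml summxE; under eq_bigr do rewrite logicalX_mul_trZ.
have [iS | iNS] := boolP (i \in S).
  by rewrite (bigD1 i) //= eqxx big1 ?addr0 // => j /andP[_ /negbTE ->].
by rewrite big1 // => j jS; case: eqP jS => // ->; rewrite (negbTE iNS).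
Qed.

End CSSLogicalZ.

Theorem mainTheorem16 (n mx mz k' : nat)
  (HX : 'M['F_2]_(mx, n)) (HZ : 'M['F_2]_(mz, n))
  (LX LZ : 'M['F_2]_(k'.+1, n))
  (hcss : HX *m HZ^T = 0)
  (hk : k'.+1 = (n - \rank HX - \rank HZ)%N)
  (hLXker : LX *m HZ^T = 0)
  (hLZker : LZ *m HX^T = 0)
  (hdual : LX *m LZ^T = 1%:M)
  (hevX : forall v : 'rV['F_2]_n, (v <= col_mx HX LX)%MS -> ~~ odd (hwt v))
  (hevZ : forall v : 'rV['F_2]_n, (v <= col_mx HZ LZ)%MS -> ~~ odd (hwt v))
  (Lset : {set 'I_k'.+1}) (hL : ord0 \notin Lset) :
  let u := \sum_(j in Lset) row j LX in
  forall z : 'rV['F_2]_n, (z - row ord0 LZ <= HZ)%MS ->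
    (forall x : 'rV['F_2]_n, (x - u <= HX)%MS -> ~~ odd (pauli_wt x z)) /\
    (forall x : 'rV['F_2]_n, (x - (row ord0 LX + u) <= HX)%MS -> odd (pauli_wt x z)).
Proof.
move=> u z z_coset.
have even_z : ~~ odd (hwt z) by apply/hevZ/(coset_sub_col_mx z_coset)/row_sub.
have HXz := stabX_mul_trZ hcss hLZker z_coset.
have uz := sum_logicalX_mul_trZ hLXker hdual z_coset Lset.
have u_LX : (u <= LX)%MS by apply: summx_sub => j _; apply: row_sub.
have parity_coset a x : (a <= LX)%MS -> (x - a <= HX)%MS ->
    odd (pauli_wt x z) = ((a *m z^T) 0 0 != 0).
  move=> a_LX xa_HX; rewrite odd_pauli_wt_even //; last first.
    exact/hevX/(coset_sub_col_mx xa_HX).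
  by rewrite (coset_mul_tr xa_HX HXz).
have u1_LX : ((row ord0 LX + u)%R <= LX)%MS by rewrite addmx_sub ?row_sub.
split=> x x_coset.
  by rewrite (parity_coset u) // uz (negbTE hL) eqxx.
rewrite (parity_coset _ _ u1_LX x_coset) mulmxDl mxE uz (negbTE hL) addr0.
by rewrite (logicalX_mul_trZ hLXker hdual z_coset) eqxx oner_eq0.
Qed.
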